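(* Every finite set $A\subseteq F^2$ can be written as a disjoint union $$A = A_* \sqcup A_1'\sqcup\cdots\sqcup A_N'$$ with $N\le \log_2(|A|+1)+1$, where $A_*$ is irregular and each $A_i'$ is $k_i$-regular (with constant $C_0=2$) for some integer $k_i\ge1$.
   Context: $F$ is a finite field of odd characteristic in which $-1$ is not a square. A line in $F^2$ is a set $\{p+tv:t\in F\}$ with $p,v\in F^2$, $v\ne0$. Given a constant $C_0\ge1$ and an integer $k\ge1$, a set $A\subseteq F^2$ is $k$-regular (with constant $C_0$) if $k\le C_0|A|^{1/2}$ and there exist a set $L$ of lines (the frame of $A$) with $k/C_0\le|L|\le C_0k$ and a partition $A=\bigsqcup_{\ell\in L}A_\ell$ with $A_\ell\subseteq\ell$ and $|A|/(C_0k)\le|A_\ell|\le C_0|A|/k$ for every $\ell\in L$. A set $A\subseteq F^2$ is irregular if $|\ell\cap A|\le|A|^{1/2}$ for every line $\ell$. *)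

From mathcomp Require Import all_boot all_order all_algebra.
From Stdlib Require Import Reals.

Set Implicit Arguments.
Unset Strict Implicit.
Unset Printing Implicit Defensive.

Import GRing.Theory.

Section Geometry.
Variable F : finFieldType.

Local Open Scope ring_scope.

Definition line_through (p v : F * F) : {set F * F} :=
  [set (p.1 + t * v.1, p.2 + t * v.2) | t : F].

Definition is_line (l : {set F * F}) : Prop :=
  exists p v : F * F, v != (0, 0) /\ l = line_through p v.

End Geometry.

Section Regularity.
Variable F : finFieldType.

(* A is k-regular with constant C0 (C0 >= 1 is assumed by the paper; here it
   is a parameter, instantiated with 2 in the main statement). *)
Definition k_regular (C0 : R) (k : nat) (A : {set F * F}) : Prop :=
  Rle (INR k) (Rmult C0 (sqrt (INR #|A|))) /\
  exists (L : {set {set F * F}}) (Apart : {set F * F} -> {set F * F}),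
    (forall l, l \in L -> is_line l) /\
    Rle (Rdiv (INR k) C0) (INR #|L|) /\ Rle (INR #|L|) (Rmult C0 (INR k)) /\
    A = \bigcup_(l in L) Apart l /\
    (forall l1 l2, l1 \in L -> l2 \in L -> l1 != l2 ->
        [disjoint Apart l1 & Apart l2]) /\
    (forall l, l \in L ->
        Apart l \subset l /\
        Rle (Rdiv (INR #|A|) (Rmult C0 (INR k))) (INR #|Apart l|) /\
        Rle (INR #|Apart l|) (Rdiv (Rmult C0 (INR #|A|)) (INR k))).

Definition irregular (A : {set F * F}) : Prop :=
  forall l : {set F * F}, is_line l ->
    Rle (INR #|l :&: A|) (sqrt (INR #|A|)).

End Regularity.

From mathcomp Require Import all_boot all_algebra zify.
From Stdlib Require Import Reals Lra Classical.
(* Importing Reals rebinds [m ^ n] on nat to [Nat.pow]; restore [expn]. *)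
From mathcomp Require Import ssrnat.

Set Implicit Arguments.
Unset Strict Implicit.
Unset Printing Implicit Defensive.

(* Remove rich lines greedily: while the remaining set B is not irregular,
   choose a line l with |B ∩ l|^2 > |B| and split off the piece B ∩ l. A piece
   Q and all pieces removed after it lie in the set B from which Q was taken,
   so their total size is below |Q|^2; hence the pieces of size in
   [2^j, 2^(j+1)) have total size below 4^(j+1). Grouping the pieces by this
   dyadic scale gives at most log2 |A| + 1 groups, and a group of k pieces of
   scale j and total size s < 4^(j+1) has k^2 <= 4 s and pieces of size within
   a factor 2 of s/k: it is 2-regular, framed by the lines of its pieces. *)

Lemma leq_INR (a b : nat) : (a <= b)%N -> (INR a <= INR b)%R.
Proof. by move=> /leP; apply: le_INR. Qed.

Lemma INR_muln (a b : nat) : INR (a * b) = (INR a * INR b)%R.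
Proof. by rewrite mulnE mult_INR. Qed.

Lemma INR_le_mul_sqrt (k c s : nat) :
  (k * k <= c * c * s)%N -> (INR k <= INR c * sqrt (INR s))%R.
Proof.
move=> /leq_INR; rewrite !INR_muln => hk.
apply: Rsqr_incr_0_var; last by apply: Rmult_le_pos; [apply: pos_INR | apply: sqrt_pos].
rewrite /Rsqr; rewrite -(sqrt_sqrt _ (pos_INR s)) in hk; nra.
Qed.

Lemma sqrt_INR_lt_sq (b m : nat) : (sqrt (INR b) < INR m)%R -> (b < m * m)%N.
Proof.
move=> hbm; apply/ltP/INR_lt; rewrite INR_muln.
have := sqrt_sqrt _ (pos_INR b); have := sqrt_pos (INR b); nra.
Qed.

Lemma INR_div_le (a b c : nat) :
  (0 < c)%N -> (a <= b * c)%N -> (INR a / INR c <= INR b)%R.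
Proof.
move=> /ltP/lt_0_INR c_gt0 /leq_INR; rewrite INR_muln => hab.
apply: (Rmult_le_reg_r (INR c)) => //.
by rewrite /Rdiv Rmult_assoc Rinv_l ?Rmult_1_r //; lra.
Qed.

Lemma INR_le_div (a b c : nat) :
  (0 < c)%N -> (a * c <= b)%N -> (INR a <= INR b / INR c)%R.
Proof.
move=> /ltP/lt_0_INR c_gt0 /leq_INR; rewrite INR_muln => hab.
apply: (Rmult_le_reg_r (INR c)) => //.
by rewrite /Rdiv Rmult_assoc Rinv_l ?Rmult_1_r //; lra.
Qed.

Lemma INR_expn (m n : nat) : INR (m ^ n) = (INR m ^ n)%R.
Proof. by elim: n => // n IH; rewrite expnS INR_muln IH. Qed.

Lemma INR_le_log2 (t m : nat) :
  (2 ^ t <= m)%N -> (INR t <= ln (INR m) / ln (INR 2))%R.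
Proof.
move=> /leq_INR; rewrite INR_expn => htm.
have ln2_gt0 : (0 < ln (INR 2))%R by rewrite -ln_1; apply: ln_increasing; simpl; lra.
have pow_gt0 : (0 < INR 2 ^ t)%R by apply: pow_lt; simpl; lra.
apply: (Rmult_le_reg_r (ln (INR 2))) => //.
rewrite /Rdiv Rmult_assoc Rinv_l ?Rmult_1_r; last by lra.
rewrite -ln_pow; last by simpl; lra.
case: (Rle_lt_or_eq_dec _ _ htm) => [/(ln_increasing _ _ pow_gt0) | ->]; lra.
Qed.

Lemma INR_le_log2_succ (N n : nat) : (N <= (trunc_log 2 n).+1)%N ->
  (INR N <= ln (INR n + INR 1) / ln (INR 2) + INR 1)%R.
Proof.
move=> /leq_INR; rewrite S_INR => le_N; apply: Rle_trans le_N _.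
apply: Rplus_le_compat_r; rewrite -S_INR; apply: INR_le_log2.
case: n => [|n]; first by rewrite trunc_log0.
exact: leq_trans (trunc_logP _ _) (leqnSn _).
Qed.

Lemma card_bigcup_disjoint (I T : finType) (S : {set I}) (P : I -> {set T}) :
    {in S &, forall i j, i != j -> [disjoint P i & P j]} ->
  #|\bigcup_(i in S) P i| = (\sum_(i in S) #|P i|)%N.
Proof.
move=> disjP; pose Q i := if i \in S then P i else set0.
have disjQ i j : i != j -> [disjoint Q i & Q j].
  move=> ij; rewrite /Q -setI_eq0.
  case: ifP => iS; case: ifP => jS; rewrite ?setI0 ?set0I //.
  by rewrite setI_eq0; apply: disjP.
rewrite big_mkcond -/(\bigcup_i Q i) -sum1_card partition_disjoint_bigcup //.
rewrite [RHS]big_mkcond; apply: eq_bigr => i _; rewrite sum1_card /Q.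
by case: ifP; rewrite ?cards0.
Qed.

Section KeyBlocks.
Variables (I J T : finType) (S : {set I}) (key : I -> J) (P : I -> {set T}).

Definition key_block j := [set x in S | key x == j].

Lemma key_block_neq0 j : j \in key @: S -> key_block j != set0.
Proof. by case/imsetP=> x xS ->; apply/set0Pn; exists x; rewrite inE xS eqxx. Qed.

Lemma bigcup_key_blocks :
  \bigcup_(i < #|key @: S|) \bigcup_(x in key_block (enum_val i)) P x =
  \bigcup_(x in S) P x.
Proof.
rewrite -(big_enum_val (fun j => \bigcup_(x in key_block j) P x)).
rewrite [RHS](partition_big key (mem (key @: S))) => [|x xS]; last exact: imset_f.
by apply: eq_bigr => j _; apply: eq_bigl => x; rewrite inE.
Qed.

Lemma key_blocks_disjoint :
    {in S &, forall x y, x != y -> [disjoint P x & P y]} ->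
  forall i i' : 'I_#|key @: S|, i != i' ->
  [disjoint \bigcup_(x in key_block (enum_val i)) P x
          & \bigcup_(x in key_block (enum_val i')) P x].
Proof.
move=> disjP i i' ii'; apply: bigcup_disjoint => y /setIdP[yS /eqP key_y].
rewrite disjoint_sym; apply: bigcup_disjoint => x /setIdP[xS /eqP key_x].
apply: disjP => //; apply: contraNneq ii' => xy.
by apply/eqP/enum_val_inj; rewrite -key_x -key_y xy.
Qed.

End KeyBlocks.

Lemma k_regular_of_piece_bounds (F : finFieldType) (c : nat) (A : {set F * F})
    (L : {set {set F * F}}) (P : {set F * F} -> {set F * F}) :
    (0 < c)%N ->
    {in L, forall l, is_line l} ->
    {in L, forall l, P l \subset l} ->
    {in L &, forall l1 l2, l1 != l2 -> [disjoint P l1 & P l2]} ->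
    A = \bigcup_(l in L) P l ->
    (#|L| * #|L| <= c * c * #|A|)%N ->
    {in L, forall l, #|A| <= c * #|L| * #|P l| /\ #|P l| * #|L| <= c * #|A|}%N ->
  k_regular (INR c) #|L| A.
Proof.
move=> c_gt0 lineL subL disjL defA sqL pieceL.
split; first exact: INR_le_mul_sqrt.
exists L, P; do 5?split => //.
- by apply: INR_div_le => //; rewrite leq_pmulr.
- by rewrite -INR_muln; apply: leq_INR; rewrite leq_pmull.
move=> l lL; have [lowP upP] := pieceL l lL.
have L_gt0 : (0 < #|L|)%N by apply/card_gt0P; exists l.
split; first exact: subL.
split; rewrite -INR_muln.
- by apply: INR_div_le; rewrite ?muln_gt0 ?c_gt0 // mulnC.
- exact: INR_le_div.
Qed.

Lemma not_irregular_rich_line (F : finFieldType) (B : {set F * F}) :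
  ~ irregular B -> exists2 l, is_line l & (#|B| < #|B :&: l| * #|B :&: l|)%N.
Proof.
move=> notB; apply: NNPP => noRich; apply: notB => l l_line.
apply: Rnot_lt_le => /sqrt_INR_lt_sq; rewrite setIC => rich.
by apply: noRich; exists l.
Qed.

Lemma sqr_lt_4_expn_trunc_log n : (n * n < 4 ^ (trunc_log 2 n).+1)%N.
Proof.
have n_lt := trunc_log_ltn n (isT : (1 < 2)%N).
by rewrite (_ : 4 = 2 * 2)%N // expnMn ltn_mul.
Qed.

Section GreedyCover.
Variable F : finFieldType.
Implicit Types (B l : {set F * F}) (S : {set {set F * F}}).

Record greedy_cover B S (P : {set F * F} -> {set F * F}) : Prop := GreedyCover {
  greedy_line : {in S, forall l, is_line l};
  greedy_sub_line : {in S, forall l, P l \subset l};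
  greedy_sub : {in S, forall l, P l \subset B};
  greedy_neq0 : {in S, forall l, P l != set0};
  greedy_disjoint : {in S &, forall l1 l2, l1 != l2 -> [disjoint P l1 & P l2]};
  greedy_irregular : irregular (B :\: \bigcup_(l in S) P l);
  greedy_mass : forall j,
    (\sum_(l in S | trunc_log 2 #|P l| == j) #|P l| < 4 ^ j.+1)%N
}.

Lemma greedy_bigcup_sub B S P :
  greedy_cover B S P -> \bigcup_(l in S) P l \subset B.
Proof. by move=> cov; apply/bigcupsP=> l /(greedy_sub cov). Qed.

Lemma greedy_cover_sum B S P :
  greedy_cover B S P -> (\sum_(l in S) #|P l| <= #|B|)%N.
Proof.
move=> cov; rewrite -card_bigcup_disjoint; last exact: (greedy_disjoint cov).
exact/subset_leq_card/greedy_bigcup_sub.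
Qed.

Lemma greedy_cover0 B : irregular B -> greedy_cover B set0 (fun=> set0).
Proof.
move=> irrB; split=> [l|l|l|l|l1 l2||j]; rewrite ?inE //.
- by rewrite big_set0 setD0.
- by rewrite big_pred0 => [|l]; rewrite ?expn_gt0 ?inE.
Qed.

Section GreedyStep.
Variables (B l : {set F * F}) (S : {set {set F * F}}) (P : {set F * F} -> {set F * F}).
Hypotheses (l_line : is_line l) (l_rich : (#|B| < #|B :&: l| * #|B :&: l|)%N).
Hypothesis cov : greedy_cover (B :\: l) S P.

Let P' x := if x == l then B :&: l else P x.

Let P'l : P' l = B :&: l.
Proof. by rewrite /P' eqxx. Qed.

Let l_notin : l \notin S.
Proof.
apply/negP=> lS; case/set0Pn: (greedy_neq0 cov lS) => x xP.
have /setDP[_ /negP] := subsetP (greedy_sub cov lS) x xP.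
by apply; apply: (subsetP (greedy_sub_line cov lS)).
Qed.

Let P'_S : {in S, P' =1 P}.
Proof. by move=> x xS; rewrite /P'; case: eqP => // xl; move: l_notin; rewrite -xl xS. Qed.

Let P'_disjoint :
  {in l |: S &, forall x y, x != y -> [disjoint P' x & P' y]}.
Proof.
have disj_l x : x \in S -> [disjoint P' l & P' x].
  move=> xS; rewrite P'l P'_S // disjoint_sym.
  apply: disjointWl (greedy_sub cov xS) _; rewrite -setI_eq0.
  by apply/eqP/setP=> y; rewrite !inE; case: (y \in l); rewrite ?andbF.
move=> x y /setU1P[-> | xS] /setU1P[-> | yS] xy.
- by rewrite eqxx in xy.
- exact: disj_l.
- by rewrite disjoint_sym; apply: disj_l.
- by rewrite !P'_S //; apply: (greedy_disjoint cov).
Qed.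

(* Only the scale of the new piece B ∩ l gains mass, and that scale now holds
   at most |B| < |B ∩ l|^2 points. *)
Let P'_mass j :
  (\sum_(x in l |: S | trunc_log 2 #|P' x| == j) #|P' x| < 4 ^ j.+1)%N.
Proof.
rewrite big_mkcondr big_setU1 //= P'l.
rewrite (eq_bigr (fun x => if trunc_log 2 #|P x| == j then #|P x| else 0)); last first.
  by move=> x xS; rewrite P'_S.
rewrite -big_mkcondr; case: eqP => [<- | _]; last exact: (greedy_mass cov).
set c := trunc_log 2 #|B :&: l|.
have scale_sum : (\sum_(x in S | trunc_log 2 #|P x| == c) #|P x| <= #|B :\: l|)%N.
  apply: leq_trans (greedy_cover_sum cov).
  by rewrite [leqRHS](bigID (fun x => trunc_log 2 #|P x| == c)) leq_addr.
rewrite -(leq_add2l #|B :&: l|) cardsID in scale_sum.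
exact: leq_ltn_trans scale_sum (ltn_trans l_rich (sqr_lt_4_expn_trunc_log _)).
Qed.

Lemma greedy_cover_step : greedy_cover B (l |: S) P'.
Proof.
split=> //.
- by move=> x /setU1P[-> | /(greedy_line cov)].
- by move=> x /setU1P[-> | xS]; rewrite ?P'l ?subsetIr // P'_S ?(greedy_sub_line cov).
- move=> x /setU1P[-> | xS]; rewrite ?P'l ?subsetIl // P'_S //.
  exact: subset_trans (greedy_sub cov xS) (subsetDl _ _).
- move=> x /setU1P[-> | xS]; last by rewrite P'_S ?(greedy_neq0 cov).
  by rewrite P'l -card_gt0; have := l_rich; nia.
rewrite big_setU1 //= P'l (eq_bigr _ P'_S).
have -> : B :\: (B :&: l :|: \bigcup_(x in S) P x) = B :\: l :\: \bigcup_(x in S) P x.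
  apply/setP=> y; rewrite !inE.
  by case: (y \in B); case: (y \in l); case: (y \in \bigcup_(x in S) P x).
exact: (greedy_irregular cov).
Qed.

End GreedyStep.

Lemma greedy_cover_exists B : exists S P, greedy_cover B S P.
Proof.
have [n] := ubnP #|B|; elim: n B => // n IH B /ltnSE B_le.
case: (classic (irregular B)) => [irrB | /not_irregular_rich_line[l l_line l_rich]].
  by exists set0, (fun=> set0); apply: greedy_cover0.
have [|S [P cov]] := IH (B :\: l).
  apply: leq_trans B_le; rewrite -(cardsID l B) -add1n leq_add2r card_gt0.
  by rewrite -card_gt0; nia.
by exists (l |: S); eexists; apply: greedy_cover_step cov.
Qed.

Lemma greedy_block_regular B S P (L : {set {set F * F}}) j :
    greedy_cover B S P -> L != set0 -> L \subset S ->
    {in L, forall l, trunc_log 2 #|P l| = j} ->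
  k_regular (INR 2) #|L| (\bigcup_(l in L) P l).
Proof.
move=> cov L_neq0 /subsetP LS scaleL.
have disjL : {in L &, forall l1 l2, l1 != l2 -> [disjoint P l1 & P l2]}.
  by move=> l1 l2 /LS l1S /LS l2S; apply: (greedy_disjoint cov).
set s := #|\bigcup_(l in L) P l|; set k := #|L|; set t := 2 ^ j.
have s_sum : s = \sum_(l in L) #|P l| by exact: card_bigcup_disjoint.
have pieceL l : l \in L -> (t <= #|P l| < 2 * t)%N.
  move=> lL; have := greedy_neq0 cov (LS l lL); rewrite -card_gt0 => P_gt0.
  by rewrite /t -(scaleL l lL) trunc_logP // -expnS trunc_log_ltn.
have s_ge : (k * t <= s)%N.
  by rewrite s_sum -sum_nat_const; apply: leq_sum => l /pieceL /andP[].
have s_le : (s <= k * (2 * t))%N.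
  by rewrite s_sum -sum_nat_const; apply: leq_sum => l /pieceL /andP[_ /ltnW].
have s_lt : (s < 4 * t * t)%N.
  rewrite (_ : 4 * t * t = 4 ^ j.+1)%N; last by rewrite /t expnS -mulnA -expnMn.
  apply: leq_ltn_trans (greedy_mass cov j).
  rewrite s_sum [leqLHS]big_mkcond [leqRHS]big_mkcond; apply: leq_sum => l _.
  by case: ifP => // lL; rewrite (LS l lL) (scaleL l lL) eqxx.
have t_gt0 : (0 < t)%N by rewrite expn_gt0.
have k_lt : (k < 4 * t)%N.
  by rewrite -(ltn_pmul2r t_gt0); apply: leq_ltn_trans s_ge s_lt.
apply: k_regular_of_piece_bounds => //.
- by move=> l /LS /(greedy_line cov).
- by move=> l /LS /(greedy_sub_line cov).
- exact: disjL.
- by rewrite -/k -/s; clearbody s k t; nia.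
- by move=> l /pieceL /andP[lo hi]; rewrite -/k -/s; clearbody s k t; split; nia.
Qed.

(* [inord] puts the dyadic scale in a finite type, so that pieces can be
   grouped with [key_block]; no piece of a cover of B has a larger scale than B. *)
Definition greedy_scale B (P : {set F * F} -> {set F * F}) l :
  'I_(trunc_log 2 #|B|).+1 := inord (trunc_log 2 #|P l|).

Lemma greedy_scale_block_regular B S P j :
    greedy_cover B S P -> key_block S (greedy_scale B P) j != set0 ->
  k_regular (INR 2) #|key_block S (greedy_scale B P) j|
    (\bigcup_(l in key_block S (greedy_scale B P) j) P l).
Proof.
move=> cov block_neq0; apply: (greedy_block_regular (j := j) cov) => //.
  by apply/subsetP=> l /setIdP[].
move=> l /setIdP[lS /eqP <-]; rewrite inordK // ltnS leq_trunc_log //.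
exact/subset_leq_card/(greedy_sub cov).
Qed.

End GreedyCover.

Local Open Scope ring_scope.

Theorem lemma4p1 (F : finFieldType)
    (Fodd : 2%N \notin [pchar F])
    (Fm1 : ~ exists x : F, x * x = - 1)
    (A : {set F * F}) :
  exists (N : nat) (Astar : {set F * F})
         (Ap : 'I_N -> {set F * F}) (ks : 'I_N -> nat),
    A = Astar :|: \bigcup_(i < N) Ap i /\
    (forall i : 'I_N, [disjoint Astar & Ap i]) /\
    (forall i j : 'I_N, i != j -> [disjoint Ap i & Ap j]) /\
    Rle (INR N) (Rplus (Rdiv (ln (Rplus (INR #|A|) (INR 1))) (ln (INR 2))) (INR 1)) /\
    irregular Astar /\
    (forall i : 'I_N, leq 1 (ks i) /\ k_regular (INR 2) (ks i) (Ap i)).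
Proof.
have [S [P cov]] := greedy_cover_exists A.
set key := greedy_scale A P; set U := \bigcup_(l in S) P l.
exists #|key @: S|, (A :\: U).
exists (fun i => \bigcup_(l in key_block S key (enum_val i)) P l).
exists (fun i => #|key_block S key (enum_val i)|).
rewrite (bigcup_key_blocks S key P); split; [|split; [|split; [|split; [|split]]]].
- by rewrite setUC -{1}(setID A U) (setIidPr (greedy_bigcup_sub cov)).
- move=> i; apply: (disjointWr (B := U)).
    by rewrite /U -(bigcup_key_blocks S key P) (bigcup_sup i).
  by have := subxx (A :\: U); rewrite subsetD => /andP[].
- exact: key_blocks_disjoint (greedy_disjoint cov).
- by apply: INR_le_log2_succ; rewrite -[leqRHS](card_ord _) max_card.
- exact: greedy_irregular cov.
move=> i; have block_neq0 := key_block_neq0 (enum_valP i).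
by split; [rewrite card_gt0 | apply: greedy_scale_block_regular].
Qed.
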